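(* Let $K$ be a Cantor set with metric $d$. For every endomorphism $T:K\to K$ and every $\varepsilon>0$ there exists an endomorphism $\widetilde T:K\to K$ such that $D(T,\widetilde T)=\max_{x\in K} d(T(x),\widetilde T(x))<\varepsilon$ and the orbit of every point of $K$ under $\widetilde T$ is finally periodic.
   Context: A Cantor set is a nonempty totally disconnected, perfect, compact metric space. An endomorphism of $K$ is a continuous surjection $K\to K$. The orbit of $x\in K$ under a map $S$ is finally periodic if there exist integers $j,N>0$ with $S^{N+j}(x)=S^{j}(x)$. *)

From HB Require Import structures.
From mathcomp Require Import all_boot all_order all_algebra.
From mathcomp Require Import all_classical all_reals all_analysis.
Set Implicit Arguments. Unset Strict Implicit. Unset Printing Implicit Defensive.
Import Order.TTheory GRing.Theory Num.Theory.
Local Open Scope classical_set_scope.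
Local Open Scope ring_scope.

Definition is_metric_of {R : realType} (K : pseudoMetricType R)
  (d : K -> K -> R) : Prop :=
  [/\ (forall x y, d x y = 0 <-> x = y),
      (forall x y, d x y = d y x),
      (forall x y z, d x z <= d x y + d y z) &
      (forall (x : K) (e : R), ball x e = [set y | d x y < e])].

Definition cantor_set {R : realType} (K : pseudoMetricType R) : Prop :=
  [/\ [set: K] !=set0, totally_disconnected [set: K],
      perfect_set [set: K] & compact [set: K]].

Definition endomorphism {R : realType} (K : pseudoMetricType R) (T : K -> K) : Prop :=
  continuous T /\ (forall y, exists x, T x = y).

Definition finally_periodic {X : Type} (S : X -> X) (x : X) : Prop :=
  exists j N : nat, [/\ (0 < j)%N, (0 < N)%N & iter (N + j) S x = iter j S x].

From HB Require Import structures.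
From mathcomp Require Import all_boot all_order all_algebra.
From mathcomp Require Import all_classical all_reals all_analysis.
From mathcomp Require Import zify lra.
Set Implicit Arguments. Unset Strict Implicit. Unset Printing Implicit Defensive.
Import Order.TTheory GRing.Theory Num.Theory.
Import numFieldNormedType.Exports.
Local Open Scope classical_set_scope.

(* A compact, metric, totally disconnected space is zero-dimensional, hence
   homeomorphic to the Cantor space bool^nat, so it suffices to approximate a
   continuous surjection S of bool^nat.  By uniform continuity the first n
   bits of S x only depend on the first m bits of x.  Since S is onto, every
   m-bit word v has a parent w such that S maps the cylinder of w into the
   n-cylinder of v.  The approximation sends the cylinder of a childless word
   w to the single point S (w 0 0 ...), and maps the cylinder of any other
   word onto the union of the cylinders of its children, choosing the child
   by a prefix code read (and dropped) from the tail.  An orbit that never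
   meets a childless cylinder reads a backward orbit of the parent map, which
   is periodic, so the dropped bits repeat and the point is periodic; the
   other orbits land in a finite set of points, which are preperiodic by the
   pigeonhole principle. *)

Lemma separated_closedl {T : topologicalType} {A B : set T} :
  closed (A `|` B) -> separated A B -> closed A.
Proof.
move=> clAB [clAB0 _]; rewrite closure_id; apply/seteqP; split.
  exact: subset_closure.
move=> z Az; have : closure (A `|` B) z by apply: closureS Az => w; left.
rewrite -(closure_id _).1 // => -[//|Bz].
by have : (closure A `&` B) z by []; rewrite clAB0.
Qed.

Section QuasiComponent.
Variable T : topologicalType.

Definition quasi_component (x : T) : set T :=
  [set z | forall U, clopen U -> U x -> U z].

Lemma closed_quasi_component x : closed (quasi_component x).
Proof.
have -> : quasi_component x = \bigcap_(U in [set U | clopen U /\ U x]) U.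
  by apply/seteqP; split => [z Qz U [cU Ux]|z Qz U cU Ux]; exact: Qz.
by apply: closed_bigI => U [[_ clU] _].
Qed.

Hypothesis compactT : compact [set: T].

Lemma clopen_avoiding_quasi_component x (Z : set T) : closed Z ->
  quasi_component x `&` Z = set0 ->
  exists W, [/\ clopen W, W x & W `&` Z = set0].
Proof.
move=> clZ QZ; apply: contrapT => noW.
pose F := filter_from [set W | clopen W /\ W x] (fun W => W `&` Z).
have FF : ProperFilter F.
  apply: filter_from_proper; first apply: filter_from_filter.
  - by exists setT; split => //; exact: clopenT.
  - move=> W1 W2 [c1 x1] [c2 x2]; exists (W1 `&` W2).
      by split; [exact: clopenI | split].
    by move=> z [[? ?] ?].
  - by move=> W [cW Wx]; apply/set0P/eqP => WZ; apply: noW; exists W.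
have FZ : F Z by exists setT; [split => //; exact: clopenT | move=> z []].
have [z [Zz Fz]] := subclosed_compact clZ compactT (subsetT Z) FF FZ.
suff Qz : quasi_component x z by have : (quasi_component x `&` Z) z by []; rewrite QZ.
move=> W cW Wx; apply: contrapT => nWz.
have nbhsCW : nbhs z (~` W).
  by apply: open_nbhs_nbhs; split => //; apply: closed_openC; case: cW.
have FW : F (W `&` Z) by exists W.
by have [w [[Ww _] nWw]] := Fz _ _ FW nbhsCW.
Qed.

Hypothesis hausdorffT : hausdorff_space T.

Lemma quasi_component_unsplit {x : T} {A B : set T} : closed A -> closed B ->
  A `&` B = set0 -> quasi_component x `<=` A `|` B -> A x ->
  B `&` quasi_component x = set0.
Proof.
move=> clA clB AB QAB Ax; apply/seteqP; split => // b [Bb Qb].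
have snB : set_nbhs A (~` B).
  apply/set_nbhsP; exists (~` B); split => //; first exact: closed_openC.
  by move=> a Aa Ba; have : (A `&` B) a by []; rewrite AB.
have [C snC clCB] := compact_normal hausdorffT compactT clA snB.
case/set_nbhsP: snC => U [oU AU UC].
pose V := ~` closure C.
have oV : open V by apply: closed_openC; exact: closed_closure.
have BV : B `<=` V by move=> z Bz /clCB.
have UV z : U z -> V z -> False by move=> /UC /subset_closure.
have [W [[oW clW] Wx WZ]] : exists W, [/\ clopen W, W x & W `&` ~` (U `|` V) = set0].
  apply: clopen_avoiding_quasi_component.
    by apply: open_closedC; exact: openU.
  apply/seteqP; split => // z [/QAB [/AU|/BV] zU zUV]; apply: zUV; by [left|right].
have WU_clopen : clopen (W `&` U).
  split; first exact: openI.
  have -> : W `&` U = W `&` ~` V.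
    apply/seteqP; split => w [Ww Hw]; split => //; first exact: UV.
    have : ~ (W `&` ~` (U `|` V)) w by rewrite WZ.
    by move=> /not_andP [//|/contrapT [//|//]].
  by apply: closedI => //; exact: open_closedC.
have [_ Ub] := Qb _ WU_clopen (conj Wx (AU _ Ax)).
exact: UV Ub (BV _ Bb).
Qed.

Lemma connected_quasi_component x : connected (quasi_component x).
Proof.
apply/connectedP => E [E0 QE sepE].
have clQ := @closed_quasi_component x.
rewrite QE in clQ.
have clE0 : closed (E false) := separated_closedl clQ sepE.
have clE1 : closed (E true).
  by rewrite setUC in clQ; apply: separated_closedl clQ _; rewrite separatedC.
have disjE := separated_disjoint sepE.
have QEsub : quasi_component x `<=` E false `|` E true by rewrite QE.
have [z1 E1z] := E0 true; have [z0 E0z] := E0 false.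
have : quasi_component x x by [].
rewrite {1}QE => -[Ex|Ex].
- have /seteqP[/(_ z1) + _] := quasi_component_unsplit clE0 clE1 disjE QEsub Ex.
  by apply; split => //; rewrite QE; right.
- rewrite setIC in disjE; rewrite setUC in QEsub.
  have /seteqP[/(_ z0) + _] := quasi_component_unsplit clE1 clE0 disjE QEsub Ex.
  by apply; split => //; rewrite QE; left.
Qed.

Lemma compact_totally_disconnected_zero_dimensional :
  totally_disconnected [set: T] -> zero_dimensional T.
Proof.
move=> tdT x y xy; apply: contrapT => noU.
have Qy : quasi_component x y.
  by move=> U cU Ux; apply: contrapT => nUy; apply: noU; exists U.
have Qx : quasi_component x x by [].
have := connected_component_max Qx (@subsetT _ _) (@connected_quasi_component x).
by rewrite tdT // => /(_ y Qy) yx; rewrite yx eqxx in xy.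
Qed.

End QuasiComponent.

Definition cylinder (x : cantor_space) (n : nat) : set cantor_space :=
  [set y | forall i, (i < n)%N -> y i = x i].

Lemma cylinder_nbhs (x : cantor_space) n : nbhs x (cylinder x n).
Proof.
elim: n => [|n IH].
  have -> : cylinder x 0 = setT by apply/seteqP; split => // y _ i; rewrite ltn0.
  exact: filterT.
have : nbhs x (proj n @^-1` [set x n]).
  apply: open_nbhs_nbhs; split => //.
  by apply: open_comp; [move=> + _; exact: proj_continuous | exact: discrete_open].
move=> xn; apply: filterS (filterI IH xn) => y [yx yxn] i.
by rewrite ltnS leq_eqVlt => /predU1P[->|]; [exact: yxn | exact: yx].
Qed.

Lemma open_cylinder (x : cantor_space) n : open (cylinder x n).
Proof.
rewrite openE => y yx; apply: filterS (cylinder_nbhs y n) => z zy i ltin.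
by rewrite zy // yx.
Qed.

Lemma nbhs_cylinder (x : cantor_space) A :
  nbhs x A -> exists n, cylinder x n `<=` A.
Proof.
pose G := filter_from [set: nat] (cylinder x).
have GF : Filter G.
  apply: filter_from_filter; first by exists 0%N.
  move=> i j _ _; exists (maxn i j) => // y yx; split => k ltk; apply: yx.
    exact: leq_trans ltk (leq_maxl _ _).
  exact: leq_trans ltk (leq_maxr _ _).
suff : G --> x by move=> /(_ A) GA /GA [n _ ?]; exists n.
apply/cvg_sup => i B /=.
rewrite (@nbhsE (initial_topology (fun f : cantor_space => f i))) /=.
move=> [V [[U oU <-] Vx] VB].
by exists i.+1 => // y yx; apply: VB; rewrite /= yx.
Qed.

Lemma cylinder_continuous (h : cantor_space -> cantor_space) :
  (forall x n, exists k, forall y, cylinder x k y -> cylinder (h x) n (h y)) ->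
  continuous h.
Proof.
move=> hcyl x B /nbhs_cylinder [n nB]; have [k hk] := hcyl x n.
by apply: filterS (cylinder_nbhs x k) => y /hk /nB.
Qed.

Lemma cylinder_lebesgue {Y : topologicalType} {h : cantor_space -> Y}
    {E : Y -> set Y} :
  continuous h -> (forall y, nbhs y (E y)) ->
  exists n, forall a b, cylinder a n b -> exists c, E (h c) (h a) /\ E (h c) (h b).
Proof.
move=> hc hE.
have nc_ex c : exists n, cylinder c n `<=` h @^-1` E (h c).
  exact/nbhs_cylinder/hc/hE.
pose nc c := projT1 (cid (nc_ex c)).
have ncP c : cylinder c (nc c) `<=` h @^-1` E (h c) := projT2 (cid (nc_ex c)).
have := cantor_space_compact; rewrite compact_cover.
move=> /(_ cantor_space setT (fun c => cylinder c (nc c))) [].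
- by move=> c _; exact: open_cylinder.
- by move=> c _; exists c.
move=> D _ Dcover; exists (\max_(c <- finmap.enum_fset D) nc c) => a b ab.
have [c /= cD ac] := Dcover a I.
have ncD : (nc c <= \max_(c <- finmap.enum_fset D) nc c)%N by exact: leq_bigmax_seq.
exists c; split; first exact: ncP.
by apply: ncP => i ltin; rewrite ab ?ac //; exact: leq_trans ltin ncD.
Qed.

Lemma cylinder_uniform_continuous (S : cantor_space -> cantor_space) n :
  continuous S ->
  exists m, (n <= m)%N /\ forall a b, cylinder a m b -> cylinder (S a) n (S b).
Proof.
move=> Sc; have [m Sm] := cylinder_lebesgue Sc (fun y => cylinder_nbhs y n).
exists (maxn m n); split => [|a b ab]; first exact: leq_maxr.
have [c [ca cb]] : exists c, cylinder (S c) n (S a) /\ cylinder (S c) n (S b).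
  by apply: Sm => i ltim; apply: ab; exact: leq_trans ltim (leq_maxl _ _).
by move=> i ltin; rewrite cb // ca.
Qed.

Definition preperiodic {X : Type} (f : X -> X) (x : X) :=
  exists j N : nat, (0 < N)%N /\ iter (N + j) f x = iter j f x.

Lemma preperiodic_iter {X : Type} (f : X -> X) x t :
  preperiodic f (iter t f x) -> preperiodic f x.
Proof.
move=> [j [N [N0 per]]]; exists (j + t), N; split => //.
by rewrite addnA iterD per -iterD.
Qed.

Lemma preperiodic_finally_periodic {X : Type} (f : X -> X) x :
  preperiodic f x -> finally_periodic f x.
Proof.
move=> [j [N [N0 per]]]; exists j.+1, N; split => //.
by rewrite addnS !iterS per.
Qed.

Lemma pigeonhole_window {V : finType} (g : nat -> V) t :
  exists k l, [/\ (t <= k)%N, (k < l)%N, (l <= t + #|V|)%N & g k = g l].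
Proof.
pose h (i : 'I_#|V|.+1) := g (t + i).
have : ~ injective h by move=> /leq_card; rewrite card_ord ltnn.
move=> /existsNP [i1 /existsNP [i2 /not_implyP [gi12 i12]]].
have {i12} i12 : (i1 : nat) != i2 by apply/eqP => /val_inj.
wlog lti12 : i1 i2 gi12 i12 / (i1 < i2)%N.
  move=> wlog_ilt; case: (ltngtP i1 i2) => lti12.
  - exact: wlog_ilt gi12 i12 lti12.
  - by apply: (wlog_ilt i2 i1 (esym gi12)); rewrite // eq_sym.
  - by rewrite lti12 eqxx in i12.
exists (t + i1), (t + i2); split; [exact: leq_addr | by rewrite ltn_add2l | |].
  by rewrite leq_add2l -ltnS.
exact: gi12.
Qed.

Lemma backward_orbit_periodic {V : finType} (f : V -> V) (w : nat -> V) :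
  (forall t, f (w t.+1) = w t) -> exists2 M, (0 < M)%N & forall t, w (t + M) = w t.
Proof.
move=> wf.
have w_iter t k : w t = iter k f (w (t + k)).
  elim: k => [|k IH]; first by rewrite addn0.
  by rewrite IH iterSr addnS wf.
have cycle t : exists2 L, (0 < L <= #|V|)%N & iter L f (w t) = w t.
  have [k [l [tk ltkl lt wkl]]] := pigeonhole_window w t.
  exists (l - k); first by rewrite subn_gt0 ltkl leq_subLR (leq_trans lt) ?leq_add2r.
  have wk : w t = iter (k - t) f (w k) by rewrite (w_iter t (k - t)) subnKC.
  have wl : w (t + (l - k)) = iter (k - t) f (w l).
    by rewrite (w_iter _ (k - t)); congr (iter _ f (w _)); lia.
  by rewrite [in LHS]wk wkl -wl -w_iter.
(* the factorial is a common multiple of all the cycle lengths *)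
have fixed s : iter (#|V|)`! f (w s) = w s.
  have [L /andP[L0 LV] fL] := cycle s.
  have /dvdnP [q ->] : (L %| (#|V|)`!)%N by apply: dvdn_fact; rewrite L0.
  by elim: q => [|q IH]; rewrite ?mul0n // mulSn iterD IH fL.
exists (#|V|)`!; first exact: fact_gt0.
by move=> t; rewrite [RHS](w_iter t (#|V|)`!) fixed.
Qed.

Lemma preperiodic_of_landing {X : Type} (V : finType) (f : X -> X) (Z : V -> X) :
  (forall x, preperiodic f x \/ exists t v, iter t.+1 f x = Z v) ->
  forall x, preperiodic f x.
Proof.
move=> land.
suff preZ v0 : preperiodic f (Z v0).
  move=> x; case: (land x) => // -[t [v xv]].
  by apply: (preperiodic_iter (t := t.+1)); rewrite xv.
pose R v v' := exists t, iter t.+1 f (Z v) = Z v'.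
have next_ex v : exists v', (exists v'', R v v'') -> R v v'.
  case: (pselect (exists v'', R v v'')) => [[v'' ?]|noR]; first by exists v''.
  by exists v => /noR.
pose next v := projT1 (cid (next_ex v)).
have nextP v : (exists v'', R v v'') -> R v (next v) := projT2 (cid (next_ex v)).
apply: contrapT => nonper; pose a k := iter k next v0.
have chain k : ~ preperiodic f (Z (a k)) /\ R (a k) (a k.+1).
  elim: k => [|k [nonper_k [t tk]]].
    split => //; apply: nextP; case: (land (Z v0)) => // -[t [v' ?]].
    by exists v', t.
  have nonper_k1 : ~ preperiodic f (Z (a k.+1)).
    by move=> per; apply: nonper_k; apply: (preperiodic_iter (t := t.+1)); rewrite tk.
  split => //; apply: nextP; case: (land (Z (a k.+1))) => // -[t' [v' ?]].
  by exists v', t'.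
have reach k d : exists s, (d <= s)%N /\ iter s f (Z (a k)) = Z (a (k + d)).
  elim: d => [|d [s [ds sk]]]; first by exists 0%N; rewrite addn0.
  have [_ [t tk]] := chain (k + d).
  exists (t.+1 + s); split; first by rewrite ltnS (leq_trans ds) // leq_addl.
  by rewrite iterD sk addnS.
have [k [l [_ ltkl _ akl]]] := pigeonhole_window a 0.
have [s [lks sk]] := reach k (l - k).
apply: (chain k).1; exists 0%N, s; split.
  by apply: leq_trans lks; rewrite subn_gt0.
by rewrite addn0 /= sk subnKC ?akl // ltnW.
Qed.

Definition shift (c : nat) (y : cantor_space) : cantor_space := fun i => y (i + c).

Lemma shift0 y : shift 0 y = y.
Proof. by apply: funext => i; rewrite /shift addn0. Qed.

Lemma shiftD a b y : shift a (shift b y) = shift (b + a) y.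
Proof. by apply: funext => i; rewrite /shift -!addnA (addnC a b). Qed.

Lemma sum_nat_periodic (c : nat -> nat) M q : (forall t, c (t + M) = c t) ->
  \sum_(0 <= s < q * M) c s = q * \sum_(0 <= s < M) c s.
Proof.
move=> c_per; elim: q => [|q IH]; first by rewrite mul0n big_geq.
rewrite mulSnr (big_cat_nat _ (leq_addr _ _)) //= IH mulSnr; congr (_ + _).
rewrite -{1}(add0n (q * M)) big_addn addKn; apply: eq_bigr => s _.
by elim: q {IH} => [|q IH]; rewrite ?addn0 // mulSnr addnA c_per.
Qed.

Section ShiftRuns.
Variables (c : nat -> nat) (y : nat -> cantor_space).
Hypothesis y_step : forall t, y t.+1 = shift (c t) (y t).

Lemma shift_run t : y t = shift (\sum_(0 <= s < t) c s) (y 0).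
Proof.
elim: t => [|t IH]; first by rewrite big_geq // shift0.
by rewrite y_step IH shiftD big_nat_recr.
Qed.

Lemma shift_runs_agree (y' : nat -> cantor_space) :
  (forall t, y' t.+1 = shift (c t) (y' t)) ->
  (forall t i, (i < c t)%N -> y t i = y' t i) ->
  forall k t i, (i < \sum_(t <= s < t + k) c s)%N -> y t i = y' t i.
Proof.
move=> y'_step head_eq; elim=> [|k IH] t i; first by rewrite addn0 big_geq.
rewrite big_ltn ?addnS ?ltnS ?leq_addr // -addSn; case: (ltnP i (c t)) => [/head_eq //|ci].
have dropped (z : nat -> cantor_space) :
    (forall t, z t.+1 = shift (c t) (z t)) -> z t i = z t.+1 (i - c t).
  by move=> z_step; rewrite z_step /shift subnK.
by rewrite -ltn_subLR // => /IH; rewrite -dropped // -dropped.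
Qed.

Lemma shift_run_periodic M : (forall t, c (t + M) = c t) ->
  (forall t i, (i < c t)%N -> y (t + M) i = y t i) -> y M = y 0.
Proof.
move=> c_per head_per.
have [sum0|sum_pos] := posnP (\sum_(0 <= s < M) c s).
  by rewrite shift_run sum0 shift0.
apply: funext => i; symmetry.
apply: (@shift_runs_agree (fun t => y (t + M)) _ _ (i.+1 * M)).
- by move=> t; rewrite addSn y_step c_per.
- by move=> t j /head_per.
- by rewrite add0n sum_nat_periodic // leq_pmulr.
Qed.

End ShiftRuns.

Section Words.
Variable m : nat.
Local Notation word := (m.-tuple bool).

Definition prefix (x : cantor_space) : word :=
  @Tuple m bool (mkseq x m) (introT eqP (size_mkseq x m)).

Definition prepend (v : word) (y : cantor_space) : cantor_space :=
  fun i => if (i < m)%N then nth false v i else y (i - m).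

Definition pad (v : word) : cantor_space := prepend v (fun=> false).

Lemma nth_prefix x i : (i < m)%N -> nth false (prefix x) i = x i.
Proof. by move=> ltim; rewrite /prefix /= nth_mkseq. Qed.

Lemma prefix_cylinder x y : cylinder x m y -> prefix y = prefix x.
Proof.
move=> xy; apply: val_inj => /=; apply: (@eq_from_nth _ false).
  by rewrite !size_mkseq.
by move=> i; rewrite size_mkseq => ltim; rewrite !nth_mkseq // xy.
Qed.

Lemma prefix_prepend v y : prefix (prepend v y) = v.
Proof.
apply: val_inj => /=; apply: (@eq_from_nth _ false).
  by rewrite size_mkseq size_tuple.
by move=> i; rewrite size_mkseq => ltim; rewrite nth_mkseq // /prepend ltim.
Qed.

Lemma shift_prepend v y : shift m (prepend v y) = y.
Proof.
by apply: funext => i; rewrite /shift /prepend ltnNge leq_addl /= addnK.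
Qed.

Lemma prepend_prefix x : prepend (prefix x) (shift m x) = x.
Proof.
apply: funext => i; rewrite /prepend /shift.
by case: ifP => ltim; [rewrite nth_prefix | rewrite subnK // leqNgt ltim].
Qed.

Lemma cylinder_pad_prefix x : cylinder (pad (prefix x)) m x.
Proof. by move=> i ltim; rewrite /pad /prepend ltim nth_prefix. Qed.

End Words.

Arguments prefix {m}.

(* For r alternatives, j < r.-1 is coded by 0^j 1 and r.-1 by 0^(r.-1). *)
Section PrefixCode.
Variable r : nat.

Definition code_index (y : cantor_space) : nat :=
  find (fun i => y i) (iota 0 r.-1).

Definition code_length (j : nat) : nat := if (j < r.-1)%N then j.+1 else r.-1.

Lemma code_index_le y : (code_index y <= r.-1)%N.
Proof. by rewrite /code_index -{2}(size_iota 0 r.-1) find_size. Qed.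

Lemma code_index_before y i : (i < code_index y)%N -> y i = false.
Proof.
move=> ltij; have := before_find 0 ltij; rewrite nth_iota ?add0n //.
exact: leq_trans ltij (code_index_le y).
Qed.

Lemma code_index_at y : (code_index y < r.-1)%N -> y (code_index y).
Proof.
move=> ltj; have : has (fun i => y i) (iota 0 r.-1).
  by rewrite has_find size_iota.
by move=> /(nth_find 0); rewrite nth_iota ?add0n.
Qed.

Lemma code_indexP y j : (j <= r.-1)%N -> (forall i, (i < j)%N -> y i = false) ->
  ((j < r.-1)%N -> y j) -> code_index y = j.
Proof.
move=> lejr before at_j; case: (ltngtP (code_index y) j) => // ltij.
- have ltjr : (code_index y < r.-1)%N by exact: leq_trans ltij lejr.
  by have := code_index_at ltjr; rewrite before.
- have ltjr : (j < r.-1)%N by exact: leq_trans ltij (code_index_le y).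
  by have := code_index_before ltij; rewrite at_j.
Qed.

Lemma code_index_cylinder y z : cylinder y r.-1 z -> code_index z = code_index y.
Proof.
move=> yz; apply: eq_in_find => i; rewrite mem_iota add0n => /andP[_ ltir].
by rewrite yz.
Qed.

Lemma code_length_le j : (j <= r.-1)%N -> (code_length j <= r.-1)%N.
Proof. by rewrite /code_length; case: ifP. Qed.

Lemma code_bits y i : (i < code_length (code_index y))%N -> y i = (i == code_index y).
Proof.
rewrite /code_length; case: ifP => ltjr ltij.
  case: (ltngtP i (code_index y)) => [ltij'|ltji|->]; first exact: code_index_before.
    by move: ltij; rewrite ltnS leqNgt ltji.
  exact: code_index_at.
have jr : code_index y = r.-1.
  by apply/eqP; rewrite eqn_leq code_index_le leqNgt ltjr.
by rewrite -jr in ltij; rewrite (code_index_before ltij) (ltn_eqF ltij).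
Qed.

End PrefixCode.

Section Approximation.
Variables (S : cantor_space -> cantor_space) (n m : nat).
Hypotheses (lenm : (n <= m)%N) (S_surj : forall y, exists x, S x = y)
  (S_unif : forall a b, cylinder a m b -> cylinder (S a) n (S b)).

Local Notation word := (m.-tuple bool).

Lemma parent_ex (v : word) :
  exists w : word, forall i, (i < n)%N -> nth false v i = S (pad w) i.
Proof.
have [a Sa] := S_surj (pad v); exists (prefix a) => i ltin.
have := S_unif (cylinder_pad_prefix a) ltin; rewrite Sa => <-.
by rewrite /pad /prepend (leq_trans ltin lenm).
Qed.

Definition parent (v : word) : word := projT1 (cid (parent_ex v)).

Lemma parentP (v : word) i : (i < n)%N -> nth false v i = S (pad (parent v)) i.
Proof. exact: (projT2 (cid (parent_ex v))). Qed.

Definition children (w : word) : seq word := [seq v <- enum {: word} | parent v == w].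

Lemma mem_children w v : (v \in children w) = (parent v == w).
Proof. by rewrite mem_filter mem_enum andbT. Qed.

Lemma uniq_children w : uniq (children w).
Proof. exact/filter_uniq/enum_uniq. Qed.

Lemma size_children w : (size (children w) <= #|{: word}|)%N.
Proof. by rewrite size_filter cardE count_size. Qed.

Lemma mem_nth_children (w : word) j : size (children w) != 0%N ->
  (j <= (size (children w)).-1)%N -> nth w (children w) j \in children w.
Proof.
by move=> r0 ltjr; apply: mem_nth; apply: leq_ltn_trans ltjr _; rewrite prednK // lt0n.
Qed.

Definition approx (x : cantor_space) : cantor_space :=
  let w := prefix x in let r := size (children w) in
  let y := shift m x in let j := code_index r y in
  if r == 0%N then S (pad w)
  else prepend (nth w (children w) j) (shift (code_length r j) y).

Lemma approx_close x : cylinder (S x) n (approx x).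
Proof.
move=> i ltin; rewrite /approx /=; case: ifPn => r0.
  by rewrite (S_unif (cylinder_pad_prefix x) ltin).
have := mem_nth_children r0 (code_index_le _ (shift m x)).
rewrite mem_children /prepend (leq_trans ltin lenm) parentP // => /eqP ->.
by rewrite (S_unif (cylinder_pad_prefix x) ltin).
Qed.

Lemma approx_surj z : exists x, approx x = z.
Proof.
set v : word := prefix z; set w := parent v; set r := size (children w).
set j := index v (children w).
have ltjr : (j < r)%N by rewrite index_mem mem_children.
have r0 : r != 0%N by rewrite -lt0n (leq_ltn_trans _ ltjr).
have lejr : (j <= r.-1)%N by rewrite -ltnS prednK // lt0n.
pose y : cantor_space :=
  fun i => if (i < code_length r j)%N then i == j else shift m z (i - code_length r j).
have yj : code_index r y = j.
  apply: code_indexP => // [i ltij|ltjr']; rewrite /y.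
    have -> : (i < code_length r j)%N.
      by rewrite /code_length; case: ifP => _; [exact: ltnW | exact: leq_trans ltij lejr].
    by rewrite ltn_eqF.
  by rewrite /code_length ltjr' ltnSn eqxx.
exists (prepend w y); rewrite /approx prefix_prepend -/r (negbTE r0) shift_prepend yj.
rewrite nth_index ?mem_children //.
have -> : shift (code_length r j) y = shift m z.
  by apply: funext => i; rewrite /shift /y ltnNge leq_addl /= addnK.
exact: prepend_prefix.
Qed.

Lemma approx_continuous : continuous approx.
Proof.
apply: cylinder_continuous => x k; exists (m + #|{: word}| + k) => y xy i ltik.
have pre_xy : prefix y = prefix x :> word.
  by apply: prefix_cylinder => l ltlm; apply: xy; rewrite -addnA ltn_addr.
have tail_xy l : (l < #|{: word}| + k)%N -> shift m y l = shift m x l.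
  by move=> ltl; rewrite /shift xy // addnC -addnA ltn_add2l.
rewrite /approx /= pre_xy; case: ifPn => // r0.
set r := size (children (prefix x)).
have ler : (r.-1 <= #|{: word}|)%N by apply: leq_trans (leq_pred _) (size_children _).
have -> : code_index r (shift m y) = code_index r (shift m x).
  apply: code_index_cylinder => l ltl; apply: tail_xy.
  exact: leq_trans ltl (leq_trans ler (leq_addr _ _)).
rewrite /prepend; case: ifP => // leim.
set c := code_length r _.
have lec : (c <= #|{: word}|)%N := leq_trans (code_length_le (code_index_le _ _)) ler.
have lt_ic : (i + c < k + #|{: word}|)%N by rewrite -addSn leq_add.
have le_mi : (m <= i)%N by rewrite leqNgt leim.
rewrite /shift xy // addnAC subnK //; apply: (leq_trans lt_ic).
by rewrite addnC -addnA leq_addl.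
Qed.

Definition child_index (w v : word) : nat := index v (children w).

Definition consumed (w v : word) : nat :=
  code_length (size (children w)) (child_index w v).

Lemma approx_step x : size (children (prefix x)) != 0%N ->
  [/\ parent (prefix (approx x)) = prefix x,
      shift m (approx x) = shift (consumed (prefix x) (prefix (approx x))) (shift m x) &
      forall i, (i < consumed (prefix x) (prefix (approx x)))%N ->
        shift m x i = (i == child_index (prefix x) (prefix (approx x)))].
Proof.
move=> r0; set r := size (children (prefix x : word)).
set j := code_index r (shift m x).
have jx := mem_nth_children r0 (code_index_le r (shift m x)).
have ltjr : (j < r)%N by rewrite (leq_ltn_trans (code_index_le _ _)) // prednK // lt0n.
have pre_approx : prefix (approx x) = nth (prefix x) (children (prefix x)) j.
  by rewrite /approx /= (negbTE r0) prefix_prepend.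
have index_j : child_index (prefix x) (prefix (approx x)) = j.
  by rewrite /child_index pre_approx index_uniq ?uniq_children.
rewrite /consumed index_j; split.
- by move: jx; rewrite pre_approx mem_children => /eqP.
- by rewrite /approx /= (negbTE r0) shift_prepend.
- by move=> i; exact: code_bits.
Qed.

Lemma approx_preperiodic_inner x :
  (forall t, size (children (prefix (iter t approx x))) != 0%N) ->
  preperiodic approx x.
Proof.
move=> inner; pose w t : word := prefix (iter t approx x).
pose y t := shift m (iter t approx x).
pose c t := consumed (w t) (w t.+1).
have step t : [/\ parent (w t.+1) = w t, y t.+1 = shift (c t) (y t) &
    forall i, (i < c t)%N -> y t i = (i == child_index (w t) (w t.+1))].
  by rewrite /c /w /y iterS; exact: approx_step.
have w_parent t : parent (w t.+1) = w t by case: (step t).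
have y_step t : y t.+1 = shift (c t) (y t) by case: (step t).
have y_head t i : (i < c t)%N -> y t i = (i == child_index (w t) (w t.+1)).
  by case: (step t) => _ _; apply.
have [M M0 wM] := backward_orbit_periodic w_parent.
have c_per t : c (t + M) = c t by rewrite /c -addSn !wM.
have yM : y M = y 0.
  apply: (shift_run_periodic y_step c_per) => t i ci.
  by rewrite y_head ?c_per // y_head // -addSn !wM.
have w0 := wM 0; rewrite add0n in w0.
exists 0%N, M; split => //; rewrite addn0 /=.
by rewrite -[LHS](@prepend_prefix m) -/(w M) -/(y M) yM w0 prepend_prefix.
Qed.

Lemma approx_finally_periodic x : finally_periodic approx x.
Proof.
apply: preperiodic_finally_periodic; move: x.
apply: (@preperiodic_of_landing _ _ approx (fun w : word => S (pad w))) => x.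
have [inner|] := pselect (forall t, size (children (prefix (iter t approx x))) != 0%N).
  by left; exact: approx_preperiodic_inner.
move=> /existsNP [t /negP/negbNE leaf]; right.
by exists t, (prefix (iter t approx x)); rewrite iterS /approx /= leaf.
Qed.

End Approximation.

Lemma cantor_space_approx (S : cantor_space -> cantor_space) n :
  continuous S -> (forall y, exists x, S x = y) ->
  exists S' : cantor_space -> cantor_space,
    [/\ continuous S', forall y, exists x, S' x = y,
        forall x, finally_periodic S' x & forall x, cylinder (S x) n (S' x)].
Proof.
move=> Sc S_surj; have [m [lenm S_unif]] := cylinder_uniform_continuous n Sc.
exists (approx lenm S_surj S_unif); split.
- exact: approx_continuous.
- exact: approx_surj.
- exact: approx_finally_periodic.
- exact: approx_close.
Qed.

Lemma iter_conjugate {A B : Type} (F : A -> B) (G : B -> A) (S : A -> A) k x :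
  cancel F G -> cancel G F -> iter k (F \o S \o G) x = F (iter k S (G x)).
Proof.
move=> FK GK; elim: k => [|k IH] /=; first by rewrite GK.
by rewrite IH FK.
Qed.

(* [homeomorphism_cantor_like] is stated for pointed spaces. *)
Definition pointed_at (R : realType) (T : pseudoMetricType R) (x : T) : Type := T.
HB.instance Definition _ (R : realType) (T : pseudoMetricType R) (x : T) :=
  PseudoMetric.on (pointed_at x).
HB.instance Definition _ (R : realType) (T : pseudoMetricType R) (x : T) :=
  isPointed.Build (pointed_at x) x.

Lemma cantor_like_homeomorphism (R : realType) (T : pseudoMetricType R) (x0 : T) :
  cantor_like T ->
  exists (F : cantor_space -> T) (G : T -> cantor_space),
    [/\ continuous F, continuous G, cancel F G & cancel G F].
Proof.
move=> cantorT; have [f [fc f_closed]] := @homeomorphism_cantor_like R (pointed_at x0) cantorT.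
exists f, (f^-1)%FUN; split => //.
- apply/continuous_closedP => A clA.
  have -> : (f^-1)%FUN @^-1` A = f @` A.
    apply/seteqP; split => y; first by move=> Ay; exists ((f^-1)%FUN y); rewrite // invK ?in_setT.
    by move=> [a Aa <-]; rewrite /= funK ?in_setT.
  exact: f_closed.
- by move=> a; rewrite funK ?in_setT.
- by move=> y; rewrite invK ?in_setT.
Qed.

Local Open Scope ring_scope.

Section MetricFacts.
Variables (R : realType) (K : pseudoMetricType R) (d : K -> K -> R).
Hypothesis hd : is_metric_of d.

Lemma metric_ge0 x y : 0 <= d x y.
Proof.
case: hd => d0 dC dtri _; have := dtri x y x.
by rewrite (proj2 (d0 x x) erefl) (dC y x); lra.
Qed.

Lemma metric_nbhs x e : 0 < e -> nbhs x [set y | d x y < e].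
Proof. by case: hd => _ _ _ dball e0; rewrite -dball; exact: nbhsx_ballx. Qed.

Lemma metric_hausdorff : hausdorff_space K.
Proof.
case: hd => d0 dC dtri dball; rewrite ball_hausdorff => a b ab.
have dab : 0 < d a b.
  by rewrite lt_def metric_ge0 andbT; apply/eqP => /d0 ab0; rewrite ab0 eqxx in ab.
have r0 : 0 < d a b / 2 by rewrite divr_gt0.
exists (PosNum r0, PosNum r0) => /=; apply/eqP/seteqP; split => // z [].
rewrite !dball /= => az bz; have := dtri a z b; rewrite (dC z b); lra.
Qed.

Lemma continuous_metric_dist (f g : K -> K) :
  continuous f -> continuous g -> continuous (fun x => d (f x) (g x)).
Proof.
case: hd => _ dC dtri dball fc gc x A /nbhs_ballP [e /= e0 eA].
have e20 : 0 < e / 2 by rewrite divr_gt0.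
have near_f : nbhs x (f @^-1` [set y | d (f x) y < e / 2]).
  exact: fc (metric_nbhs (f x) e20).
have near_g : nbhs x (g @^-1` [set y | d (g x) y < e / 2]).
  exact: gc (metric_nbhs (g x) e20).
apply: filterS (filterI near_f near_g) => z [/= fz gz]; apply: eA.
rewrite /ball /= ltr_distlC.
have := dtri (f x) (f z) (g x); have := dtri (f z) (g z) (g x).
have := dtri (f z) (f x) (g z); have := dtri (f x) (g x) (g z).
rewrite (dC (f z) (f x)) (dC (g z) (g x)) => t1 t2 t3 t4.
by apply/andP; split; lra.
Qed.

Lemma metric_cylinder_close (F : cantor_space -> K) e : continuous F -> 0 < e ->
  exists n, forall a b, cylinder a n b -> d (F a) (F b) < e.
Proof.
case: hd => _ dC dtri _ Fc e0; have e20 : 0 < e / 2 by rewrite divr_gt0.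
have [n Fn] := cylinder_lebesgue Fc (fun y => metric_nbhs y e20).
exists n => a b /Fn [c [/= ca cb]].
have := dtri (F a) (F c) (F b); rewrite (dC (F a) (F c)) => tri; lra.
Qed.

End MetricFacts.

Theorem theorem1p1 (R : realType) (K : pseudoMetricType R) (d : K -> K -> R)
  (hd : is_metric_of d) (hK : cantor_set K)
  (T : K -> K) (hT : endomorphism T) (eps : R) (heps : 0 < eps) :
  exists T' : K -> K,
    [/\ endomorphism T',
        (exists x0 : K, (forall x : K, d (T x) (T' x) <= d (T x0) (T' x0))
                        /\ d (T x0) (T' x0) < eps) &
        (forall x : K, finally_periodic T' x)].
Proof.
case: hK => -[x0 _] tdK perfectK compactK; case: hT => Tc T_surj.
have hausK := metric_hausdorff hd.
have [F [G [Fc Gc FK GK]]] := cantor_like_homeomorphism x0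
  (And4 perfectK compactK hausK (compact_totally_disconnected_zero_dimensional compactK hausK tdK)).
have [n Fn] := metric_cylinder_close hd Fc heps.
have Sc : continuous (G \o T \o F).
  by move=> a; apply: continuous_comp (Fc a) _; apply: continuous_comp (Tc _) (Gc _).
have S_surj y : exists x, (G \o T \o F) x = y.
  by have [k Tk] := T_surj (F y); exists (G k); rewrite /= GK Tk FK.
have [S' [S'c S'_surj S'_per S'_close]] := cantor_space_approx n Sc S_surj.
pose T' := F \o S' \o G.
have T'c : continuous T'.
  by move=> x; apply: continuous_comp (Gc x) _; apply: continuous_comp (S'c _) (Fc _).
have close x : d (T x) (T' x) < eps.
  by move: (Fn _ _ (S'_close (G x))); rewrite /= !GK.
have [c _ cmax] := compact_EVT_max (ex_intro _ x0 I) compactK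
  (continuous_subspaceT (continuous_metric_dist hd Tc T'c)).
exists T'; split.
- by split => // y; have [a S'a] := S'_surj (G y); exists (F a); rewrite /T' /= FK S'a GK.
- by exists c; split => [x|]; [apply: cmax; rewrite in_setT | exact: close].
- move=> x; have [j [N [j0 [N0 per]]]] := S'_per (G x).
  by exists j, N; split => //; rewrite !iter_conjugate // per.
Qed.
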